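(* Let $S$ be a compact oriented surface with corner, $\Phi$ a flow on $S$, $C\subset\mathrm{Int}(S)$ a $\Phi$-invariant (piecewise smooth) simple closed curve, $\pi:\widetilde S\to S$ the cutting surgery along $C$, and $\widetilde\Phi$ the flow on $\widetilde S$ with $\pi\circ\widetilde\Phi=\Phi\circ(\mathrm{Id}_{\mathbb R}\times\pi)$. Let $x\in S\setminus C$ and $\widetilde x:=\pi^{-1}(x)$. Then $\pi(\omega(\widetilde x))=\omega(x)$, where $\omega(\widetilde x)$ is taken with respect to $\widetilde\Phi$ and $\omega(x)$ with respect to $\Phi$.
   Context: Cutting surgery: with a collar $C\times(-\epsilon,\epsilon)\subset\mathrm{Int}(S)$, $\widetilde S=(S\setminus C)\sqcup C_1\sqcup C_2$, $C_1,C_2$ copies of $C$ attached as the boundaries of $C\times(-\epsilon,0)$ and $C\times(0,\epsilon)$; $\pi$ is the identity on $S\setminus C$ and identifies each $C_i$ with $C$. The $\omega$-limit set of $x$ is the set of limits $\lim_n\Phi(t_n,x)$ over sequences $t_n\to\infty$. *)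

From HB Require Import structures.
From mathcomp Require Import all_boot all_order all_algebra.
From mathcomp Require Import all_classical all_reals all_analysis.
Set Implicit Arguments. Unset Strict Implicit. Unset Printing Implicit Defensive.
Import Order.TTheory GRing.Theory Num.Theory.
Import numFieldNormedType.Exports.
Local Open Scope classical_set_scope.
Local Open Scope ring_scope.

Section Defs.
Variable R : realType.

Definition is_flow (X : topologicalType) (Phi : R -> X -> X) : Prop :=
  continuous (fun p : R * X => Phi p.1 p.2) /\
  (forall x, Phi 0 x = x) /\
  (forall s t x, Phi (s + t) x = Phi s (Phi t x)).

Definition omega_limit (X : topologicalType) (Phi : R -> X -> X) (x : X) : set X :=
  [set y | exists t : nat -> R,
     (forall M : R, \forall n \near \oo, M < t n) /\
     (fun n => Phi (t n) x) @ \oo --> y].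

(** Strips in the (angle, height) plane; the angle is taken modulo 1,
    so a map defined on them and 1-periodic in the angle is a map on
    (circle) x (interval). *)
Definition strip (eps : R) : set (R * R) := [set p | - eps < p.2 < eps].
Definition lower_strip (eps : R) : set (R * R) := [set p | - eps < p.2 <= 0].
Definition upper_strip (eps : R) : set (R * R) := [set p | 0 <= p.2 < eps].
Definition zero_section : set (R * R) := [set p | p.2 = 0].

(** f, on the domain A, factors injectively through (R/Z) x R. *)
Definition circ_injective (X : Type) (f : R * R -> X) (A : set (R * R)) : Prop :=
  forall p q, A p -> A q ->
    (f p = f q <-> p.2 = q.2 /\ exists k : int, p.1 = q.1 + k%:~R).

Definition open_on (X Y : topologicalType) (f : X -> Y) (A : set X) : Prop :=
  forall U, open U -> open (f @` (U `&` A)).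

(** e : S^1 x (-eps,eps) -> S is a collar (topological embedding onto an
    open subset of S, hence inside the interior of S); the curve is
    C = e(S^1 x {0}). *)
Definition collar (S : topologicalType) (e : R * R -> S) (eps : R) : Prop :=
  0 < eps /\
  {within strip eps, continuous e} /\
  circ_injective e (strip eps) /\
  open_on e (strip eps).

Definition collar_curve (S : Type) (e : R * R -> S) : set S :=
  e @` zero_section.

(** Cutting surgery along C = e(S^1 x {0}):
    pi : St -> S is the identity (homeomorphism) over S \ C, and
    St contains the two copies C1 = e1(S^1 x {0}), C2 = e2(S^1 x {0}) of C,
    attached as boundaries of the half collars e1(S^1 x (-eps,0)) and
    e2(S^1 x (0,eps)), with pi o e1 = e and pi o e2 = e. *)
Definition cutting_surgery (S St : topologicalType) (e : R * R -> S) (eps : R)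
    (pi : St -> S) (e1 e2 : R * R -> St) : Prop :=
  let C := collar_curve e in
  continuous pi /\
  (* pi is a homeomorphism from pi^-1(S \ C) onto S \ C *)
  (forall y, ~ C y -> exists! yt, pi yt = y) /\
  open_on pi (pi @^-1` (~` C)) /\
  {within lower_strip eps, continuous e1} /\
  {within upper_strip eps, continuous e2} /\
  circ_injective e1 (lower_strip eps) /\
  circ_injective e2 (upper_strip eps) /\
  open_on e1 (lower_strip eps) /\
  open_on e2 (upper_strip eps) /\
  (forall p, lower_strip eps p -> pi (e1 p) = e p) /\
  (forall p, upper_strip eps p -> pi (e2 p) = e p) /\
  pi @^-1` C = e1 @` zero_section `|` e2 @` zero_section /\
  [disjoint e1 @` zero_section & e2 @` zero_section].

End Defs.

From HB Require Import structures.
From mathcomp Require Import all_boot all_order all_algebra.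
From mathcomp Require Import all_classical all_reals all_analysis.
Import Order.TTheory GRing.Theory Num.Theory.
Import numFieldNormedType.Exports.
Local Open Scope classical_set_scope.
Local Open Scope ring_scope.

(* The orbit of x avoids the invariant curve C, so Phit(t, xt) is the unique
   pi-preimage of Phi(t, x).  Off C, pi is a local homeomorphism and limits
   lift directly.  A limit e(p) on C is approached through the collar, hence
   either infinitely often through its lower half or eventually through its
   upper half; along those times the lifted orbit converges to e1(p), resp.
   e2(p). *)

Lemma cvg_geq_infty {phi : nat -> nat} :
  (forall n, (n <= phi n)%N) -> phi @ \oo --> \oo.
Proof. by move=> phi_ge; apply/cvgnyPge => N; exists N => // n /= /leq_trans; apply. Qed.

Lemma subseq_or_near {P Q : nat -> Prop} :
  (\forall n \near \oo, P n \/ Q n) ->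
  (exists2 phi : nat -> nat, (forall n, (n <= phi n)%N) & forall n, P (phi n)) \/
  \forall n \near \oo, Q n.
Proof.
move=> [N _ PQ].
have [P_cofinal|] := pselect (forall m, exists n, (m <= n)%N /\ P n).
  have [phi phiP] := choice P_cofinal.
  by left; exists phi => n; case: (phiP n).
move=> /existsNP[m P_late]; right; exists (maxn N m) => // n /=.
rewrite geq_max => /andP[Nn mn].
by have [Pn|//] := PQ n Nn; case: P_late; exists n.
Qed.

Lemma strip_split (R : realType) (eps : R) :
  strip eps = lower_strip eps `|` upper_strip eps.
Proof.
apply/seteqP; split => q /=.
  by case/andP => q_gt q_lt; case: (leP q.2 0) => q0; [left|right];
     rewrite /lower_strip /upper_strip /= ?q_gt ?q_lt ?q0 ?ltW.
case=> /andP[q_gt q_lt]; apply/andP; split => //.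
- by rewrite (le_lt_trans q_lt) // -oppr_lt0 (lt_le_trans q_gt).
- by rewrite (lt_le_trans _ q_gt) // oppr_lt0 (le_lt_trans q_gt).
Qed.

Lemma flow_invariant_setC {R : realType} {X : topologicalType}
    {Phi : R -> X -> X} {A : set X} :
  is_flow Phi -> (forall t y, A y -> A (Phi t y)) ->
  forall t y, ~ A y -> ~ A (Phi t y).
Proof.
by move=> [_ [Phi0 PhiD]] A_inv t y Ny /(A_inv (- t)); rewrite -PhiD addNr Phi0.
Qed.

Lemma omega_limit_semiconj {R : realType} {X Y : topologicalType}
    (Phi : R -> X -> X) (Psi : R -> Y -> Y) (pi : X -> Y) (x : X) :
  continuous pi -> (forall t z, pi (Phi t z) = Psi t (pi z)) ->
  pi @` omega_limit Phi x `<=` omega_limit Psi (pi x).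
Proof.
move=> pi_cont semiconj _ [y [t [t_oo cvg_y]] <-]; exists t; split => //.
under eq_fun do rewrite -semiconj.
exact: cvg_comp cvg_y (pi_cont y).
Qed.

Lemma cvg_lift_open_on {X Y : topologicalType} { pi : X -> Y } {A : set X}
    {b : nat -> X} {yt : X} :
  open_on pi A -> A yt ->
  (forall n z, pi z = pi (b n) -> z = b n) ->
  pi \o b @ \oo --> pi yt -> b @ \oo --> yt.
Proof.
move=> pi_open Ayt fibre_b cvg_pib V; rewrite nbhsE => -[W [oW Wyt] WV].
have /cvg_pib near_W : nbhs (pi yt) (pi @` (W `&` A)).
  by apply: open_nbhs_nbhs; split; [exact: pi_open | exists yt].
suff : \forall n \near \oo, V (b n) by [].
near=> n; have [z [Wz _] /fibre_b <-] : (pi @` (W `&` A)) (pi (b n)) by near: n.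
exact: WV.
Unshelve. all: end_near.
Qed.

Lemma cvg_lift_half_collar {R : realType} {X Y : topologicalType}
    { pi : X -> Y } {e : R * R -> Y} {ei : R * R -> X} {A D : set (R * R)}
    {b : nat -> X} {p : R * R} :
  open_on e A -> circ_injective e A ->
  {within D, continuous ei} -> (forall q, D q -> pi (ei q) = e q) ->
  (forall q r, q.2 = r.2 -> D q -> D r) -> D `<=` A -> D p ->
  (forall n z, pi z = pi (b n) -> z = b n) ->
  (\forall n \near \oo, (e @` D) (pi (b n))) ->
  pi \o b @ \oo --> e p -> b @ \oo --> ei p.
Proof.
move=> e_open e_inj ei_cont pi_ei D_height DA Dp fibre_b near_D cvg_pib V Vei.
have := (@subspace_continuousP _ D _ ei).1 ei_cont p Dp V Vei.
rewrite nbhs_simpl /= /within nbhsE => -[W [oW Wp] WV].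
have /cvg_pib near_W : nbhs (e p) (e @` (W `&` A)).
  apply: open_nbhs_nbhs; split; first exact: e_open.
  by exists p => //; split; last exact: DA.
suff : \forall n \near \oo, V (b n) by [].
near=> n.
have [d Dd ed] : (e @` D) (pi (b n)) by near: n.
have [c [Wc Ac] ec] : (e @` (W `&` A)) (pi (b n)) by near: n.
have [c_height _] : c.2 = d.2 /\ exists k : int, c.1 = d.1 + k%:~R.
  by apply/(e_inj c d Ac (DA d Dd)); rewrite ec ed.
have Dc : D c by apply: D_height Dd.
by rewrite -(fibre_b n (ei c)) ?pi_ei //; exact: WV.
Unshelve. all: end_near.
Qed.

Lemma cvg_lift_curve {R : realType} {S St : topologicalType} {e : R * R -> S}
    {eps : R} { pi : St -> S } {e1 e2 : R * R -> St} {b : nat -> St} {p : R * R} :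
  collar e eps -> cutting_surgery e eps pi e1 e2 ->
  (forall n z, pi z = pi (b n) -> z = b n) ->
  p.2 = 0 -> pi \o b @ \oo --> e p ->
  exists2 phi : nat -> nat, (forall n, (n <= phi n)%N) &
    exists2 yt, pi yt = e p & b \o phi @ \oo --> yt.
Proof.
move=> [eps_gt0 [_ [e_inj e_open]]] surgery fibre_b p0 cvg_pib.
have [_ [_ [_ [e1_cont [e2_cont [_ [_ [_ [_ [pi_e1 [pi_e2 _]]]]]]]]]]] := surgery.
have lower_p : lower_strip eps p by rewrite /lower_strip /= p0 oppr_lt0 eps_gt0 lexx.
have upper_p : upper_strip eps p by rewrite /upper_strip /= p0 eps_gt0 lexx.
have lower_sub : lower_strip eps `<=` strip eps by rewrite strip_split; exact: subsetUl.
have upper_sub : upper_strip eps `<=` strip eps by rewrite strip_split; exact: subsetUr.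
have near_halves : \forall n \near \oo,
    (e @` lower_strip eps) (pi (b n)) \/ (e @` upper_strip eps) (pi (b n)).
  have /cvg_pib near_strip : nbhs (e p) (e @` (setT `&` strip eps)).
    apply: open_nbhs_nbhs; split; first exact: e_open openT.
    by exists p => //; split => //; exact: lower_sub.
  near=> n; have [q [_]] : (e @` (setT `&` strip eps)) (pi (b n)) by near: n.
  by rewrite strip_split => -[] half_q eq; [left|right]; exists q.
have [[phi phi_ge lower]|upper] := subseq_or_near near_halves.
  exists phi => //; exists (e1 p); first exact: pi_e1.
  apply: (cvg_lift_half_collar e_open e_inj e1_cont pi_e1 _ lower_sub lower_p).
  - by move=> q r qr; rewrite /lower_strip /= qr.
  - by move=> n; apply: fibre_b.
  - exact: nearW.
  - exact: cvg_comp (cvg_geq_infty phi_ge) cvg_pib.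
exists id => //; exists (e2 p); first exact: pi_e2.
apply: (cvg_lift_half_collar e_open e_inj e2_cont pi_e2 _ upper_sub upper_p) => //.
by move=> q r qr; rewrite /upper_strip /= qr.
Unshelve. all: end_near.
Qed.

Lemma cvg_lift_cut {R : realType} {S St : topologicalType} {e : R * R -> S}
    {eps : R} { pi : St -> S } {e1 e2 : R * R -> St} {b : nat -> St} {y : S} :
  collar e eps -> cutting_surgery e eps pi e1 e2 ->
  (forall n z, pi z = pi (b n) -> z = b n) ->
  pi \o b @ \oo --> y ->
  exists2 phi : nat -> nat, (forall n, (n <= phi n)%N) &
    exists2 yt, pi yt = y & b \o phi @ \oo --> yt.
Proof.
move=> collar_e surgery fibre_b cvg_pib.
have [[p p0 yE]|yNC] := pselect (collar_curve e y).
  by subst y; exact: cvg_lift_curve collar_e surgery fibre_b p0 cvg_pib.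
have [_ [pi_fibre [pi_open _]]] := surgery.
have [yt [pi_yt _]] := pi_fibre y yNC.
have yt_off : (pi @^-1` ~` collar_curve e) yt by rewrite /= pi_yt.
exists id => //; exists yt => //.
by apply: (cvg_lift_open_on pi_open yt_off fibre_b); rewrite pi_yt.
Qed.

Theorem lemma2p6 (R : realType) (S St : pseudoMetricType R)
    (Phi : R -> S -> S) (Phit : R -> St -> St)
    (e : R * R -> S) (eps : R) (pi : St -> S) (e1 e2 : R * R -> St)
    (x : S) (xt : St) :
  hausdorff_space S ->
  compact [set: S] ->
  is_flow Phi ->
  collar e eps ->
  (forall t y, collar_curve e y -> collar_curve e (Phi t y)) ->
  cutting_surgery e eps pi e1 e2 ->
  is_flow Phit ->
  (forall t yt, pi (Phit t yt) = Phi t (pi yt)) ->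
  ~ collar_curve e x ->
  pi @^-1` [set x] = [set xt] ->
  pi @` omega_limit Phit xt = omega_limit Phi x.
Proof.
move=> _ _ flow collar_e C_inv surgery _ semiconj xNC fibre_x.
have pi_xt : pi xt = x by have : (pi @^-1` [set x]) xt by rewrite fibre_x.
have [pi_cont [pi_fibre _]] := surgery.
apply/seteqP; split; first by rewrite -pi_xt; exact: omega_limit_semiconj.
move=> y [t [t_oo orbit_y]].
pose b n := Phit (t n) xt.
have pib n : pi (b n) = Phi (t n) x by rewrite /b semiconj pi_xt.
have fibre_b n z : pi z = pi (b n) -> z = b n.
  have [w [_ w_uniq]] := pi_fibre _ (flow_invariant_setC flow C_inv (t n) x xNC).
  by rewrite pib => /w_uniq <-; exact/w_uniq/pib.
have cvg_pib : pi \o b @ \oo --> y.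
  by rewrite (_ : pi \o b = fun n => Phi (t n) x) //; apply: funext => n; exact: pib.
have [phi phi_ge [yt <- cvg_yt]] := cvg_lift_cut collar_e surgery fibre_b cvg_pib.
exists yt => //; exists (t \o phi); split => // M.
exact: (cvg_geq_infty phi_ge) (t_oo M).
Qed.
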